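(* Let $M=(Q,P,\Sigma,\Delta,q_0,R,h)$ be a nondeleting mttr. Let $q\in Q$, $\sigma\in\Sigma^{(k)}$ with $k\ge 1$, $y\in Y$, and $p,p_1,\dots,p_k\in P$ such that $p=h_\sigma(p_1,\dots,p_k)$ and $L_{p_j}\neq\emptyset$ for every $j\in[k]$. Let $\zeta=\mathrm{rhs}_M(q,\sigma,\langle p_1,\dots,p_k\rangle)$. Suppose that $\mathrm{pout}_M((q,y),p)$ is finite and that a symbol $\langle r,x_i\rangle$ (with $i\in[k]$ and $r\in Q^{(m)}$) occurs in $\lfloor\zeta\rfloor_y$ at node $u$. Then for every $l\in[m]$ such that the node $ul$ of $\lfloor\zeta\rfloor_y$ is not labeled $\$$, the set $\mathrm{pout}_M((r,y_l),p_i)$ is finite.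
   Context: Trees: for a ranked alphabet $\Sigma$, $T_\Sigma$ is the set of finite ranked ordered trees over $\Sigma$, and $T_\Sigma(A)$ the trees over $\Sigma$ with additional rank-0 symbols from $A$. Nodes are addressed by Dewey paths: $\varepsilon$ is the root and $ui$ is the $i$-th child of $u$; $s[u]$ is the label and $s/u$ the subtree at $u$. $X_k=\{x_1,\dots,x_k\}$ are input variables and $Y=\{y_1,y_2,\dots\}$, $Y_m=\{y_1,\dots,y_m\}$ are parameters. A (deterministic bottom-up) tree automaton $(P,\Sigma,h)$ has a finite state set $P$ and maps $h_\sigma:P^k\to P$ for $\sigma\in\Sigma^{(k)}$; $\hat h:T_\Sigma\to P$ is its run, $\hat h(\sigma(s_1,\dots,s_k))=h_\sigma(\hat h(s_1),\dots,\hat h(s_k))$, and $L_p=\{s\in T_\Sigma\mid \hat h(s)=p\}$. A (total, deterministic) macro tree transducer with look-ahead (mttr) is $M=(Q,P,\Sigma,\Delta,q_0,R,h)$ where $Q$ is a ranked alphabet of states, $\Sigma,\Delta$ are ranked input/output alphabets, $(P,\Sigma,h)$ is a tree automaton (the look-ahead), $q_0\in Q^{(0)}$, and for each $q\in Q^{(m)}$, $\sigma\in\Sigma^{(k)}$, $p_1,\dots,p_k\in P$ there is exactly one rule $\langle q,\sigma(x_1:p_1,\dots,x_k:p_k)\rangle(y_1,\dots,y_m)\to t$ with $t=\mathrm{rhs}_M(q,\sigma,\langle p_1,\dots,p_k\rangle)\in T_{\Delta\cup\langle Q,X_k\rangle}(Y_m)$, where the symbol $\langle q',x_i\rangle$ has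 the rank of $q'$. For $q\in Q^{(m)}$ and $s=\sigma(s_1,\dots,s_k)\in T_\Sigma$, the $q$-translation $M_q(s)\in T_\Delta(Y_m)$ is obtained from $\mathrm{rhs}_M(q,\sigma,\langle \hat h(s_1),\dots,\hat h(s_k)\rangle)$ by replacing (recursively, innermost first) each subtree $\langle q',x_i\rangle(\xi_1,\dots,\xi_n)$ by $M_{q'}(s_i)$ with each $y_j$ replaced by (the result for) $\xi_j$; $M(s)=M_{q_0}(s)$. $M$ is nondeleting if in every rule with left-hand state of rank $m$ each parameter $y_1,\dots,y_m$ occurs in the right-hand side. Least common output form: for $Y'\subseteq Y$ and $s\in T_{\Delta\cup\langle Q,X\rangle}(Y)$, $\lfloor s\rfloor_{Y'}$ is the tree obtained from $s$ by replacing every maximal subtree containing no parameter from $Y'$ by a new rank-0 symbol $\$$ (i.e., $\lfloor y\rfloor_{Y'}=y$ for $y\in Y'$; $\lfloor\delta(s_1,\dots,s_n)\rfloor_{Y'}=\delta(\lfloor s_1\rfloor_{Y'},\dots,\lfloor s_n\rfloor_{Y'})$ if $s$ contains a parameter of $Y'$; otherwise $\$$). Write $\lfloor s\rfloor_y$ for $\lfloor s\rfloor_{\{y\}}$. For $q\in Q$, $p\in P$: $\mathrm{pout}_M((q,Y'),p)=\{\lfloor M_q(s)\rfloor_{Y'}\mid s\in L_p\}$ and $\mathrm{pout}_M((q,y),p)=\mathrm{pout}_M((q,\{y\}),p)$. *)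

From mathcomp Require Import all_boot.
Set Implicit Arguments.
Unset Strict Implicit.
Unset Printing Implicit Defensive.

Inductive tree (A : Type) : Type := Node of A & seq (tree A).
Arguments Node {A} _ _.

Fixpoint wranked (A : Type) (rk : A -> nat) (t : tree A) : bool :=
  let: Node a ch := t in (size ch == rk a) && all (wranked rk) ch.

(* Dewey addressing: paths are sequences of 1-based child indices;
   the empty path is the root.  [subtree_at t u] is [Some (t/u)] if u is a
   node of t, [None] otherwise; [label_at t u] is [t[u]]. *)
Fixpoint subtree_at (A : Type) (t : tree A) (u : seq nat) : option (tree A) :=
  match u with
  | [::] => Some t
  | i :: u' =>
      let: Node _ ch := t in
      if (0 < i) && (i <= size ch) then subtree_at (nth t ch i.-1) u' else None
  end.

Definition label_at (A : Type) (t : tree A) (u : seq nat) : option A :=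
  match subtree_at t u with Some (Node a _) => Some a | None => None end.

(* Labels of trees in T_{Delta u <Q,X>}(Y) extended with the symbol $:
   LD d   : output symbol d in Delta
   LQ r i : the symbol <r, x_i>  (i >= 1), of rank rank(r)
   LY j   : the parameter y_j    (j >= 1), of rank 0
   LDollar: the rank-0 symbol $ used by least common output forms. *)
Inductive lab (Q Delta : Type) : Type :=
  | LD of Delta
  | LQ of Q & nat
  | LY of nat
  | LDollar.
Arguments LD {Q Delta} _.
Arguments LQ {Q Delta} _ _.
Arguments LY {Q Delta} _.
Arguments LDollar {Q Delta}.

Section MTT.
Variables (Q P Sigma Delta : finType)
          (rkQ : Q -> nat) (rkS : Sigma -> nat) (rkD : Delta -> nat).

Local Notation ltree := (tree (lab Q Delta)).

Fixpoint wf_rhs (k m : nat) (t : ltree) : bool :=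
  let: Node a ch := t in
  (match a with
   | LD d => size ch == rkD d
   | LQ r i => (0 < i <= k) && (size ch == rkQ r)
   | LY j => (0 < j <= m) && (size ch == 0)
   | LDollar => false
   end) && all (wf_rhs k m) ch.

(* Total deterministic macro tree transducer with look-ahead
   M = (Q, P, Sigma, Delta, q0, R, h).  The rules R are given by [rhs]:
   rhs q sigma [p_1;..;p_k] = rhs_M(q, sigma, <p_1,..,p_k>). *)
Record mttr := Mttr {
  q0 : Q;
  la : Sigma -> seq P -> P;
  rhs : Q -> Sigma -> seq P -> ltree;
  q0_rank : rkQ q0 = 0;
  rhs_wf : forall q sigma ps, size ps = rkS sigma ->
             wf_rhs (rkS sigma) (rkQ q) (rhs q sigma ps)
}.

Fixpoint run (h : Sigma -> seq P -> P) (s : tree Sigma) : P :=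
  let: Node a ch := s in h a (map (run h) ch).

Definition inL (M : mttr) (p : P) (s : tree Sigma) : Prop :=
  wranked rkS s /\ run (la M) s = p.

Fixpoint subst (args : seq ltree) (t : ltree) : ltree :=
  let: Node a ch := t in
  match a with
  | LY j => if (0 < j) && (j <= size args) then nth t args j.-1 else t
  | _ => Node a (map (subst args) ch)
  end.

Definition dflt_tr : Q -> ltree := fun _ => Node LDollar [::].

Fixpoint eval_rhs (ts : seq (Q -> ltree)) (t : ltree) : ltree :=
  let: Node a ch := t in
  match a with
  | LQ r i => subst (map (eval_rhs ts) ch) (nth dflt_tr ts i.-1 r)
  | _ => Node a (map (eval_rhs ts) ch)
  end.

Fixpoint trans (M : mttr) (s : tree Sigma) (q : Q) : ltree :=
  let: Node sigma ss := s in
  eval_rhs (map (trans M) ss) (rhs M q sigma (map (run (la M)) ss)).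

Definition nondeleting (M : mttr) : Prop :=
  forall q sigma ps, size ps = rkS sigma ->
    forall j, 0 < j <= rkQ q ->
      exists u, label_at (rhs M q sigma ps) u = Some (LY j).

End MTT.

Fixpoint has_param (Q Delta : Type) (Y' : pred nat) (t : tree (lab Q Delta)) : bool :=
  let: Node a ch := t in
  (match a with LY j => Y' j | _ => false end) || has (has_param Y') ch.

Fixpoint lcf (Q Delta : Type) (Y' : pred nat) (t : tree (lab Q Delta)) : tree (lab Q Delta) :=
  let: Node a ch := t in
  if has_param Y' t then Node a (map (lcf Y') ch) else Node LDollar [::].

(* propositional membership in a list (no eqType needed) *)
Fixpoint In_seq (A : Type) (x : A) (l : seq A) : Prop :=
  match l with [::] => False | y :: l' => y = x \/ In_seq x l' end.

Definition pout_finite (Q P Sigma Delta : finType) (rkQ : Q -> nat) (rkS : Sigma -> nat)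
    (rkD : Delta -> nat) (M : mttr P rkQ rkS rkD) (q : Q) (Y' : pred nat) (p : P) : Prop :=
  exists l : seq (tree (lab Q Delta)),
    forall s, inL M p s -> In_seq (lcf Y' (trans M s q)) l.

From mathcomp Require Import all_boot.
Set Implicit Arguments.
Unset Strict Implicit.
Unset Printing Implicit Defensive.

(* Fix inputs s_j in L_{p_j} for j <> i and let t range over L_{p_i}.  The
   input s = sigma(s_1, .., t, .., s_k) lies in L_p and M_q(s) is obtained
   from zeta by evaluation.  The call <r, x_i>(xi_1, .., xi_m) at node u of
   zeta evaluates to M_r(t)[y_j := eval xi_j], a subtree of M_q(s); since
   xi_l contains y and M is nondeleting, this subtree contains y, so its
   y-form is a subtree of the y-form of M_q(s), which ranges over the finite
   list L witnessing pout((q, y), p).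

   The y_l-form of a tree T is recovered, up to finitely many choices, from
   the y-form of T[y_j := args_j] whenever args_l contains y: every node of
   the former is either $, y_l, or copies the label of the latter
   ([lcf_in_candidates]).  Hence the y_l-forms of the M_r(t) lie in the finite
   list [candidates l L]. *)

Definition tree_In_ind (A : Type) (Pr : tree A -> Prop)
    (IH : forall a ch, (forall c, In_seq c ch -> Pr c) -> Pr (Node a ch)) :
    forall t, Pr t :=
  fix F t := match t with Node a ch => IH a ch
    ((fix G (l : seq (tree A)) : forall c, In_seq c l -> Pr c :=
       match l return forall c, In_seq c l -> Pr c with
       | [::] => fun c (no : False) => match no with end
       | c0 :: l' => fun c Hc => match Hc with
           | or_introl e => eq_ind c0 Pr (F c0) c e
           | or_intror h => G l' c h end
       end) ch) end.

Section Membership.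
Variable A : Type.
Implicit Types (x : A) (l : seq A).

Lemma In_seq_nth x0 l n : n < size l -> In_seq (nth x0 l n) l.
Proof. elim: l n => [|a l IH] [|n] //= Hn; [by left | right; exact: IH]. Qed.

Lemma In_seq_map B (f : A -> B) x l : In_seq x l -> In_seq (f x) (map f l).
Proof. elim: l => [|a l IH] //= [->|Hx]; [by left | right; exact: IH]. Qed.

Lemma In_seq_catl x l1 l2 : In_seq x l1 -> In_seq x (l1 ++ l2).
Proof. elim: l1 => [|a l IH] //= [->|Hx]; [by left | right; exact: IH]. Qed.

Lemma In_seq_catr x l1 l2 : In_seq x l2 -> In_seq x (l1 ++ l2).
Proof. by elim: l1 => [|a l IH] //= Hx; right; exact: IH. Qed.

Lemma In_seq_flatten x l ls : In_seq l ls -> In_seq x l -> In_seq x (flatten ls).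
Proof.
elim: ls => [|a ls IH] //= [->|Hl] Hx; first exact: In_seq_catl.
by apply: In_seq_catr; exact: IH.
Qed.

Lemma all_In_seq (f : pred A) l x : all f l -> In_seq x l -> f x.
Proof. by elim: l => [|a l IH] //= /andP[Ha Hl] [<-|Hx] //; exact: IH. Qed.

Lemma In_seq_all (f : pred A) l : (forall x, In_seq x l -> f x) -> all f l.
Proof.
elim: l => [|a l IH] //= Hf; rewrite Hf ?IH //; last by left.
by move=> x Hx; apply: Hf; right.
Qed.

Lemma has_In_seq (f : pred A) l : has f l -> exists x, In_seq x l /\ f x.
Proof.
elim: l => [|a l IH] //= /orP[Ha|Hl]; first by exists a; split => //; left.
by have [x [Hx Hfx]] := IH Hl; exists x; split => //; right.
Qed.

Lemma In_seq_has (f : pred A) l x : In_seq x l -> f x -> has f l.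
Proof. by elim: l => [|a l IH] //= [<-|Hx] Hfx; [rewrite Hfx | rewrite IH ?orbT]. Qed.

End Membership.

Section Cartesian.
Variable A : Type.

Fixpoint cartesian (ls : seq (seq A)) : seq (seq A) :=
  match ls with
  | [::] => [:: [::]]
  | l :: ls' => flatten (map (fun x => map (cons x) (cartesian ls')) l)
  end.

Fixpoint pointwise_In (xs : seq A) (ls : seq (seq A)) : Prop :=
  match xs, ls with
  | [::], [::] => True
  | x :: xs', l :: ls' => In_seq x l /\ pointwise_In xs' ls'
  | _, _ => False
  end.

Lemma In_cartesian xs ls : pointwise_In xs ls -> In_seq xs (cartesian ls).
Proof.
elim: xs ls => [|x xs IH] [|l ls] //=; first by left.
move=> [Hx Hxs]; apply: (In_seq_flatten (l := map (cons x) (cartesian ls))).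
  exact: (In_seq_map (fun x => map (cons x) (cartesian ls))).
by apply: In_seq_map; exact: IH.
Qed.

Lemma pointwise_In_map B (f : B -> A) (g : B -> seq A) (l : seq B) :
  (forall c, In_seq c l -> In_seq (f c) (g c)) -> pointwise_In (map f l) (map g l).
Proof.
elim: l => [|a l IH] //= Hfg; split; first by apply: Hfg; left.
by apply: IH => c Hc; apply: Hfg; right.
Qed.

End Cartesian.

Lemma choose_seq (A : Type) (x0 : A) (R : nat -> A -> Prop) n :
  (forall j, j < n -> exists x, R j x) ->
  exists xs, size xs = n /\ forall j, j < n -> R j (nth x0 xs j).
Proof.
elim: n => [|n IH] HR; first by exists [::].
have [xs [Hsz Hxs]] := IH (fun j Hj => HR j (ltnW Hj)).
have [x Hx] := HR n (ltnSn n).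
exists (rcons xs x); split; first by rewrite size_rcons Hsz.
move=> j Hj; rewrite nth_rcons Hsz; case: ltngtP => Hjn; first exact: Hxs.
  by move: Hj; rewrite ltnS leqNgt Hjn.
by rewrite Hjn.
Qed.

Section Addressing.
Variable A : Type.
Implicit Types (t : tree A) (u v : seq nat).

Lemma subtree_at_cat t u v :
  subtree_at t (u ++ v) = obind (fun t' => subtree_at t' v) (subtree_at t u).
Proof. by elim: u t => [|i u IH] [a ch] //=; case: ifP. Qed.

Fixpoint subtrees t : seq (tree A) :=
  let: Node a ch := t in t :: flatten (map subtrees ch).

Lemma subtree_at_subtrees t t' v : subtree_at t v = Some t' -> In_seq t' (subtrees t).
Proof.
elim: v t => [|i v IH] [a ch] /=; first by case=> <-; left.
case: ifP => // /andP[Hi0 Hi1] Hs; right.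
apply: (In_seq_flatten (l := subtrees (nth (Node a ch) ch i.-1))); last exact: IH.
by apply: In_seq_map; apply: In_seq_nth; rewrite prednK.
Qed.

End Addressing.
Arguments subtrees {A} t.

Section CommonForms.
Variables Q Delta : Type.
Local Notation ltree := (tree (lab Q Delta)).
Implicit Types (t : ltree) (Y : pred nat).

Fixpoint leaf_params t : bool :=
  let: Node a ch := t in (if a is LY _ then nilp ch else true) && all leaf_params ch.

Lemma subtree_has_param Y t t' v :
  subtree_at t v = Some t' -> has_param Y t' -> has_param Y t.
Proof.
elim: v t => [|i v IH] [a ch] /=; first by case=> <-.
case: ifP => // /andP[Hi0 Hi1] Hs Hp; apply/orP; right.
apply: (In_seq_has (x := nth (Node a ch) ch i.-1)); last exact: IH Hs Hp.
by apply: In_seq_nth; rewrite prednK.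
Qed.

Lemma label_has_param Y t w j :
  label_at t w = Some (LY j) -> Y j -> has_param Y t.
Proof.
rewrite /label_at; case E: subtree_at => [[a ch]|] // [Ha] HY.
by apply: (subtree_has_param E) => /=; rewrite Ha HY.
Qed.

Lemma has_param_label j t :
  has_param (pred1 j) t -> exists w, label_at t w = Some (LY j).
Proof.
elim/tree_In_ind: t => a ch IH /= /orP[Ha|Hch].
  by exists [::]; rewrite /label_at /=; case: a Ha => // j' /eqP ->.
move/has_nthP: Hch => /(_ (Node a ch)) [n Hn Hp].
have [w Hw] := IH _ (In_seq_nth (Node a ch) Hn) Hp.
by exists (n.+1 :: w); move: Hw; rewrite /label_at /= Hn.
Qed.

Lemma subtree_at_lcf Y t t' v :
  subtree_at t v = Some t' -> has_param Y t' ->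
  subtree_at (lcf Y t) v = Some (lcf Y t').
Proof.
elim: v t => [|i v IH] [a ch] /=; first by case=> <-.
move=> Hs Hp; have /= -> := subtree_has_param (t := Node a ch) (v := i :: v) Hs Hp.
rewrite /= size_map; move: Hs; case: ifP => // /andP[Hi0 Hi1] Hs.
by rewrite (nth_map (Node a ch)) ?prednK //; exact: IH.
Qed.

Lemma lcf_subtree_at Y t u a ch :
  subtree_at (lcf Y t) u = Some (Node a ch) -> a <> LDollar ->
  exists ch', [/\ subtree_at t u = Some (Node a ch'),
                  has_param Y (Node a ch') & ch = map (lcf Y) ch'].
Proof.
elim: u t => [|i u IH] [b cht] /=.
  by case: ifP => Hh [<- <-] // _; exists cht; rewrite /= Hh.
case: ifP => Hh /=; last by case: i {IH}.
rewrite size_map; case: ifP => // /andP[Hi0 Hi1].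
by rewrite (nth_map (Node b cht)) ?prednK //; exact: IH.
Qed.

End CommonForms.
Arguments leaf_params {Q Delta} t.

Section Substitution.
Variables Q Delta : finType.
Local Notation ltree := (tree (lab Q Delta)).
Implicit Types (t : ltree) (args : seq ltree) (Y : pred nat).

Lemma subst_leaf_params args t :
  leaf_params t -> all leaf_params args -> leaf_params (subst args t).
Proof.
elim/tree_In_ind: t => a ch IH /= /andP[Ha Hch] Hargs.
have Hm : all leaf_params (map (subst args) ch).
  by rewrite all_map; apply: In_seq_all => x Hx /=; apply: IH => //; exact: all_In_seq Hch Hx.
case: a Ha => [d|r n|j|] Ha //=.
case: ifP => [/andP[Hj0 Hj1]|_]; last by rewrite /= Ha Hch.
by apply: (all_In_seq Hargs); apply: In_seq_nth; rewrite prednK.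
Qed.

Lemma subtree_at_subst args t w j x0 :
  leaf_params t -> label_at t w = Some (LY j) -> 0 < j <= size args ->
  subtree_at (subst args t) w = Some (nth x0 args j.-1).
Proof.
move=> + + Hj; elim: w t => [|i w IH] [a ch] /=.
  rewrite /label_at /= => _ [->]; rewrite Hj; congr Some.
  by apply: set_nth_default; case/andP: Hj => Hj0 Hj1; rewrite prednK.
move=> /andP[Ha Hch]; rewrite /label_at /=.
case: ifP => // /andP[Hi0 Hi1] Hl.
have Hi : i.-1 < size ch by rewrite prednK.
rewrite (set_nth_default x0) // in Hl.
have Hyc : leaf_params (nth x0 ch i.-1) by apply: (all_In_seq Hch); exact: In_seq_nth.
case: a Ha Hl => [d|r n|j'|] Ha Hl /=.
3: by case: ch Ha Hi1 Hi {Hl Hch Hyc}.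
all: by rewrite size_map Hi0 Hi1 /= (nth_map x0) //; exact: IH.
Qed.

Lemma subst_has_param Y args t l x0 :
  leaf_params t -> has_param (pred1 l) t -> 0 < l <= size args ->
  has_param Y (nth x0 args l.-1) -> has_param Y (subst args t).
Proof.
move=> Ht /has_param_label [w Hw] Hl.
exact: subtree_has_param (subtree_at_subst x0 Ht Hw Hl).
Qed.

Fixpoint candidates_of (l : nat) t : seq ltree :=
  let: Node a ch := t in
  Node LDollar [::] :: Node (LY l) [::]
    :: map (Node a) (cartesian (map (candidates_of l) ch)).

Lemma lcf_in_candidates Y args t l x0 :
  leaf_params t -> 0 < l <= size args -> has_param Y (nth x0 args l.-1) ->
  In_seq (lcf (pred1 l) t) (candidates_of l (lcf Y (subst args t))).
Proof.
move=> + Hl Hp; elim/tree_In_ind: t => a ch IH Ht.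
have [Hl_t|Hl_t] := boolP (has_param (pred1 l) (Node a ch)); last first.
  by move: Hl_t => /= /negbTE ->; case: (lcf _ _) => ? ? /=; left.
have HY := subst_has_param Ht Hl_t Hl Hp.
move: Hl_t Ht => /= Hl_t /andP[Ha Hch]; rewrite Hl_t.
case: a Ha Hl_t HY => [d|r n|j|] Ha Hl_t /= HY.
3: case: ch Ha IH Hch Hl_t HY => // _ _ _; rewrite orbF => /eqP -> _.
3: by case: (lcf _ _) => ? ? /=; right; left.
all: rewrite HY /=; right; right; apply: In_seq_map; apply: In_cartesian.
all: rewrite -!map_comp; apply: pointwise_In_map => c Hc /=.
all: by apply: IH => //; exact: all_In_seq Hch Hc.
Qed.

Definition candidates (l : nat) (L : seq ltree) : seq ltree :=
  flatten (map (candidates_of l) (flatten (map subtrees L))).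

Lemma In_candidates l L T v T' x :
  In_seq T L -> subtree_at T v = Some T' -> In_seq x (candidates_of l T') ->
  In_seq x (candidates l L).
Proof.
move=> HT Hv Hx; apply: (In_seq_flatten _ Hx); apply: In_seq_map.
by apply: (In_seq_flatten _ (subtree_at_subtrees Hv)); exact: In_seq_map.
Qed.

End Substitution.
Arguments candidates_of {Q Delta} l t.

Section Evaluation.
Variables (Q P Sigma Delta : finType)
          (rkQ : Q -> nat) (rkS : Sigma -> nat) (rkD : Delta -> nat).
Local Notation ltree := (tree (lab Q Delta)).
Local Notation wf := (wf_rhs rkQ rkD).

Lemma subtree_wf k m t z u : subtree_at t u = Some z -> wf k m t -> wf k m z.
Proof.
elim: u t => [|i u IH] [a ch] /=; first by case=> <-.
case: ifP => // /andP[Hi0 Hi1] Hs /andP[_ Hch]; apply: (IH _ Hs).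
by apply: (all_In_seq Hch); apply: In_seq_nth; rewrite prednK.
Qed.

Definition translation_ok (f : Q -> ltree) : Prop :=
  forall r, leaf_params (f r) /\ forall j, 0 < j <= rkQ r -> has_param (pred1 j) (f r).

Definition translations_ok (ts : seq (Q -> ltree)) (k : nat) : Prop :=
  size ts = k /\ forall i, i < k -> translation_ok (nth (@dflt_tr Q Delta) ts i).

Lemma translations_ok_map A (f : A -> Q -> ltree) (xs : seq A) :
  (forall x, In_seq x xs -> translation_ok (f x)) -> translations_ok (map f xs) (size xs).
Proof.
move=> Hf; split; first by rewrite size_map.
case: xs Hf => // x0 xs Hf i Hi.
by rewrite (nth_map x0) //; apply: Hf; exact: In_seq_nth.
Qed.

Section WithTranslations.
Variables (k : nat) (ts : seq (Q -> ltree)).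
Hypothesis ts_ok : translations_ok ts k.

Lemma called_translation_ok i : 0 < i <= k -> translation_ok (nth (@dflt_tr Q Delta) ts i.-1).
Proof. by case/andP=> Hi0 Hi1; apply: ts_ok.2; rewrite prednK. Qed.

Lemma eval_leaf_params m t : wf k m t -> leaf_params (eval_rhs ts t).
Proof.
elim/tree_In_ind: t => a ch IH /= /andP[Ha Hch].
have Hm : all leaf_params (map (eval_rhs ts) ch).
  by rewrite all_map; apply: In_seq_all => x Hx /=; apply: IH => //; exact: all_In_seq Hch Hx.
case: a Ha => [d|r i|j|] Ha //=; last by case/andP: Ha => _; case: ch {IH Hch Hm}.
apply: subst_leaf_params => //; case/andP: Ha => Hi _.
by case: (called_translation_ok Hi r).
Qed.

Lemma eval_has_param Y m t : wf k m t -> has_param Y t -> has_param Y (eval_rhs ts t).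
Proof.
elim/tree_In_ind: t => a ch IH /= /andP[Ha Hch].
have Hchild : has (has_param Y) ch -> has (has_param Y) (map (eval_rhs ts) ch).
  move/has_In_seq => [x [Hx Hp]]; apply: (In_seq_has (In_seq_map _ Hx)).
  by apply: IH => //; exact: all_In_seq Hch Hx.
case: a Ha => [d|r i|j|] Ha //=; last by move=> /orP[->|/Hchild ->]; rewrite ?orbT.
move/has_nthP => /(_ (Node (LQ r i) ch)) [n Hn Hp].
case/andP: Ha => Hi /eqP Hsz.
have [Hr_leaf Hr_par] := called_translation_ok Hi r.
apply: (subst_has_param (l := n.+1) (x0 := Node (LQ r i) ch) Hr_leaf).
- by apply: Hr_par; rewrite -Hsz.
- by rewrite size_map.
rewrite /= (nth_map (Node (LQ r i) ch)) //.
by apply: IH => //; [exact: In_seq_nth | apply: (all_In_seq Hch); exact: In_seq_nth].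
Qed.

Lemma eval_subtree_at m t z u :
  wf k m t -> subtree_at t u = Some z ->
  exists v, subtree_at (eval_rhs ts t) v = Some (eval_rhs ts z).
Proof.
elim: u t => [|i u IH] [a ch] /=; first by move=> _ [<-]; exists [::].
move=> /andP[Ha Hch]; case: ifP => // /andP[Hi0 Hi1] Hs.
have Hi : i.-1 < size ch by rewrite prednK.
have [v Hv] := IH _ (all_In_seq Hch (In_seq_nth (Node a ch) Hi)) Hs.
case: a Ha Hs Hv => [d|r n|j|] Ha Hs Hv //=.
- by exists (i :: v) => /=; rewrite size_map Hi0 Hi1 /= (nth_map (Node (LD d) ch)).
- case/andP: Ha => Hn /eqP Hsz.
  have [Hr_leaf Hr_par] := called_translation_ok Hn r.
  have Hi_r : 0 < i <= rkQ r by rewrite Hi0 -Hsz.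
  have [w Hw] := has_param_label (Hr_par i Hi_r).
  have := subtree_at_subst (Node (LQ r n) ch) Hr_leaf Hw (args := map (eval_rhs ts) ch).
  rewrite size_map Hi0 Hi1 (nth_map (Node (LQ r n) ch)) // => /(_ isT) Hsub.
  by exists (w ++ v); rewrite subtree_at_cat Hsub.
- by move: Ha Hi => /andP[_ /eqP /size0nil ->].
Qed.

Lemma lcf_call_candidate Y m zeta u r i chz l :
  wf k m zeta -> subtree_at zeta u = Some (Node (LQ r i) chz) ->
  0 < l <= size chz -> has_param Y (nth (Node LDollar [::]) chz l.-1) ->
  exists v T, subtree_at (lcf Y (eval_rhs ts zeta)) v = Some T /\
    In_seq (lcf (pred1 l) (nth (@dflt_tr Q Delta) ts i.-1 r)) (candidates_of l T).
Proof.
move=> Hwf Hz Hl HY.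
have /= /andP[/andP[Hi /eqP Hsz] Hwc] := subtree_wf Hz Hwf.
have [Hr_leaf Hr_par] := called_translation_ok Hi r.
set args := map (eval_rhs ts) chz.
have Hl_args : 0 < l <= size args by rewrite size_map.
have Hl1 : l.-1 < size chz by case/andP: Hl => Hl0 Hl1; rewrite prednK.
have HY_arg : has_param Y (nth (eval_rhs ts (Node LDollar [::])) args l.-1).
  rewrite (nth_map (Node LDollar [::])) //.
  by apply: eval_has_param HY; apply: (all_In_seq Hwc); exact: In_seq_nth.
have Hcall : eval_rhs ts (Node (LQ r i) chz) = subst args (nth (@dflt_tr Q Delta) ts i.-1 r) by [].
have [v Hv] := eval_subtree_at Hwf Hz.
exists v, (lcf Y (eval_rhs ts (Node (LQ r i) chz))); split.
  apply: subtree_at_lcf Hv _; rewrite Hcall.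
  by apply: subst_has_param Hr_leaf (Hr_par l _) Hl_args HY_arg; rewrite -Hsz.
by rewrite Hcall; exact: lcf_in_candidates Hr_leaf Hl_args HY_arg.
Qed.

End WithTranslations.

Lemma lcf_call_site Y k m zeta u r i l :
  wf k m zeta -> label_at (lcf Y zeta) u = Some (LQ r i) -> 0 < l <= rkQ r ->
  label_at (lcf Y zeta) (u ++ [:: l]) <> Some LDollar ->
  exists chz, [/\ subtree_at zeta u = Some (Node (LQ r i) chz), size chz = rkQ r
                & has_param Y (nth (Node LDollar [::]) chz l.-1)].
Proof.
move=> Hwf; rewrite /label_at subtree_at_cat.
case Eu: (subtree_at (lcf Y zeta) u) => [[a ch]|] // [Ha] /andP[Hl0 Hl1] Hchild.
subst a; have Hnot_dollar : LQ r i <> LDollar :> lab Q Delta by [].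
have [chz [Hz _ Hch]] := lcf_subtree_at Eu Hnot_dollar.
have /= /andP[/andP[_ /eqP Hsz] _] := subtree_wf Hz Hwf.
exists chz; split => //; move: Hchild.
rewrite Hch /= size_map Hsz Hl0 Hl1 /= (nth_map (Node LDollar [::])) ?Hsz ?prednK //.
by case: (nth _ _ _) => a' ch' /=; case: ifP.
Qed.

Variable M : mttr P rkQ rkS rkD.
Hypothesis M_nondeleting : nondeleting M.

(* By induction on the input, every translation of a nondeleting M is well
   shaped; nondeletion provides the occurrence of each parameter. *)
Lemma trans_ok s : wranked rkS s -> translation_ok (trans M s).
Proof.
elim/tree_In_ind: s => a ss IH /= /andP[/eqP Hsz Hss] q.
have Hts : translations_ok (map (trans M) ss) (rkS a).
  rewrite -Hsz; apply: translations_ok_map => s Hs.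
  by apply: (IH s Hs); exact: all_In_seq Hss Hs.
have Hps : size (map (run (la M)) ss) = rkS a by rewrite size_map.
have Hwf := rhs_wf M q Hps.
split; first exact: eval_leaf_params Hts _ _ Hwf.
move=> j Hj; have [w Hw] := M_nondeleting Hps Hj.
by apply: eval_has_param Hts _ _ _ Hwf _; apply: (label_has_param Hw); exact: eqxx.
Qed.

Lemma translations_ok_children sigma ss :
  wranked rkS (Node sigma ss) -> translations_ok (map (trans M) ss) (rkS sigma).
Proof.
move=> /= /andP[/eqP <- Hss]; apply: translations_ok_map => s Hs.
by apply: trans_ok; exact: all_In_seq Hss Hs.
Qed.

Lemma inL_replace sigma ps ss i t p0 s0 :
  size ps = rkS sigma -> size ss = rkS sigma -> i < rkS sigma ->
  (forall j, j < rkS sigma -> inL M (nth p0 ps j) (nth s0 ss j)) ->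
  inL M (nth p0 ps i) t ->
  inL M (la M sigma ps) (Node sigma (set_nth s0 ss i t)) /\
  map (run (la M)) (set_nth s0 ss i t) = ps.
Proof.
move=> Hps Hss Hi Hssp Ht; set chs := set_nth s0 ss i t.
have Hsz : size chs = rkS sigma by rewrite size_set_nth Hss; apply/maxn_idPr.
have Hchs j : j < rkS sigma -> inL M (nth p0 ps j) (nth s0 chs j).
  by move=> Hj; rewrite nth_set_nth /=; case: eqP => [->|_] //; exact: Hssp.
have Hrun : map (run (la M)) chs = ps.
  apply: (eq_from_nth (x0 := p0)); first by rewrite size_map Hsz Hps.
  move=> j; rewrite size_map Hsz => Hj.
  by rewrite (nth_map s0) ?Hsz //; case: (Hchs j Hj).
split=> //; split; last by rewrite /= Hrun.
rewrite /= Hsz eqxx /=; apply/(all_nthP s0) => j; rewrite Hsz => Hj.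
by case: (Hchs j Hj).
Qed.

End Evaluation.

Theorem mainTheorem1 (Q P Sigma Delta : finType)
    (rkQ : Q -> nat) (rkS : Sigma -> nat) (rkD : Delta -> nat)
    (M : mttr P rkQ rkS rkD) (q : Q) (sigma : Sigma) (y : nat) (p : P) (ps : seq P) :
  nondeleting M ->
  0 < rkS sigma ->
  0 < y ->
  size ps = rkS sigma ->
  p = la M sigma ps ->
  (forall j, j < rkS sigma -> exists s, inL M (nth p ps j) s) ->
  pout_finite M q (pred1 y) p ->
  forall (u : seq nat) (r : Q) (i : nat),
    0 < i <= rkS sigma ->
    label_at (lcf (pred1 y) (rhs M q sigma ps)) u = Some (LQ r i) ->
    forall l, 0 < l <= rkQ r ->
      label_at (lcf (pred1 y) (rhs M q sigma ps)) (u ++ [:: l]) <> Some LDollar ->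
      pout_finite M r (pred1 l) (nth p ps i.-1).
Proof.
move=> ND _ _ Hps Hp Hne [L HL] u r i /andP[Hi0 Hi1] Hcall l Hl Hchild.
have Hwf := rhs_wf M q Hps.
have [chz [Hz Hsz HY]] := lcf_call_site Hwf Hcall Hl Hchild.
have [ss [Hss Hssp]] := choose_seq (Node sigma [::]) Hne.
exists (candidates l L) => t Ht.
have Hi : i.-1 < rkS sigma by rewrite prednK.
have [Hs Hrun] := inL_replace Hps Hss Hi Hssp Ht.
set chs := set_nth _ ss i.-1 t in Hs Hrun.
have Hts := translations_ok_children ND Hs.1.
have Hl_chz : 0 < l <= size chz by rewrite Hsz.
have [v [T [Hv Hcand]]] := lcf_call_candidate Hts Hwf Hz Hl_chz HY.
have Hti : nth (@dflt_tr Q Delta) (map (trans M) chs) i.-1 = trans M t.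
  have Hi_chs : i.-1 < size chs by rewrite -(size_map (run (la M))) Hrun Hps.
  by rewrite (nth_map (Node sigma [::])) // nth_set_nth /= eqxx.
have Htrans : trans M (Node sigma chs) q = eval_rhs (map (trans M) chs) (rhs M q sigma ps).
  by rewrite /= Hrun.
rewrite -Htrans in Hv; rewrite Hti in Hcand; rewrite -Hp in Hs.
exact: In_candidates (HL _ Hs) Hv Hcand.
Qed.
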